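(* Let $G$ be a compact group such that for every positive integer $n$ there is exactly one equivalence class of irreducible representations of $G$ of dimension $n$. For $j\in\frac12\mathbb{Z}_{\ge 0}$ let $D_j$ denote the irreducible representation of dimension $2j+1$. Then for every $j\in\frac12\mathbb{Z}$ with $j\ge \frac12$, $$D_{1/2}\otimes D_j\cong D_{j-1/2}\oplus D_{j+1/2},$$ and $D_{1/2}\otimes D_0\cong D_{1/2}$.
   Context: Representations are continuous finite-dimensional unitary representations on complex Hilbert spaces, considered up to unitary equivalence. (The group $SU(2)$ satisfies the hypothesis.) *)

From HB Require Import structures.
From mathcomp Require Import all_boot all_order all_algebra.
From mathcomp Require Import all_classical all_reals topology normedtype.
From mathcomp Require Import complex mxtens.
Set Implicit Arguments. Unset Strict Implicit. Unset Printing Implicit Defensive.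
Import Order.TTheory GRing.Theory Num.Theory.
Import numFieldNormedType.Exports.
Local Open Scope ring_scope.
Local Open Scope classical_set_scope.

Definition is_compact_group (G : topologicalType) (mul : G -> G -> G)
    (inv : G -> G) (e : G) : Prop :=
  (forall x y z, mul x (mul y z) = mul (mul x y) z) /\
  (forall x, mul e x = x /\ mul x e = x) /\
  (forall x, mul (inv x) x = e /\ mul x (inv x) = e) /\
  continuous (fun p : G * G => mul p.1 p.2) /\
  continuous inv /\
  hausdorff_space G /\
  compact [set: G].

Definition adjmx (R : realType) m n (A : 'M[R[i]]_(m, n)) : 'M[R[i]]_(n, m) :=
  (map_mx Num.conj A)^T.

Definition unitary_mx (R : realType) m n (P : 'M[R[i]]_(m, n)) : Prop :=
  P *m adjmx P = 1%:M /\ adjmx P *m P = 1%:M.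

(* A continuous unitary representation of dimension n: g acts on column
   vectors v in C^n by v |-> rho g *m v. *)
Definition is_urep (R : realType) (G : topologicalType) (mul : G -> G -> G)
    (e : G) n (rho : G -> 'M[R[i]]_n) : Prop :=
  [/\ rho e = 1%:M,
      (forall g h, rho (mul g h) = rho g *m rho h),
      (forall g, unitary_mx (rho g)) &
      (forall i j, continuous ((fun g => rho g i j) : G -> (R[i])^o))].

(* A subspace W of C^n is spanned by the (transposed) rows of a matrix W;
   it is invariant iff rho g W ⊆ W for all g, i.e. W *m (rho g)^T ⊆ W. *)
Definition invariant_subspace (R : realType) (G : Type) n
    (rho : G -> 'M[R[i]]_n) m (W : 'M[R[i]]_(m, n)) : Prop :=
  forall g, (W *m (rho g)^T <= W)%MS.

Definition irreducible_rep (R : realType) (G : Type) n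
    (rho : G -> 'M[R[i]]_n) : Prop :=
  (0 < n)%N /\
  forall m (W : 'M[R[i]]_(m, n)), invariant_subspace rho W ->
    \rank W = 0%N \/ \rank W = n.

Definition rep_equiv (R : realType) (G : Type) m n
    (rho : G -> 'M[R[i]]_m) (sigma : G -> 'M[R[i]]_n) : Prop :=
  exists P : 'M[R[i]]_(n, m), unitary_mx P /\
    forall g, P *m rho g = sigma g *m P.

Definition tens_rep (G : Type) (R : realType) m n
    (rho : G -> 'M[R[i]]_m) (sigma : G -> 'M[R[i]]_n) :
    G -> 'M[R[i]]_(m * n) := fun g => tensmx (rho g) (sigma g).

Definition dsum_rep (G : Type) (R : realType) m n
    (rho : G -> 'M[R[i]]_m) (sigma : G -> 'M[R[i]]_n) :
    G -> 'M[R[i]]_(m + n) := fun g => block_mx (rho g) 0 0 (sigma g).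

Definition irrep (R : realType) (G : topologicalType) (mul : G -> G -> G)
    (e : G) n (rho : G -> 'M[R[i]]_n) : Prop :=
  is_urep mul e rho /\ irreducible_rep rho.

From HB Require Import structures.
From mathcomp Require Import all_boot all_order all_algebra.
From mathcomp Require Import all_classical all_reals topology normedtype.
From mathcomp Require Import complex mxtens.
From mathcomp Require Import sesquilinear spectral.
From mathcomp Require Import zify.
Import numFieldNormedType.Exports.
Set Implicit Arguments. Unset Strict Implicit. Unset Printing Implicit Defensive.
Import Order.TTheory GRing.Theory Num.Theory Num.Def.
Local Open Scope ring_scope.

(* Let D
   be the irreducible representation of dimension 2 and D_n the one of
   dimension n.  Being unique, D is equivalent to its complex conjugate, so a
   partial transposition turns intertwiners V -> D (x) W into intertwiners
   D (x) V -> W (Frobenius reciprocity).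
   By induction on k, the irreducible quotients of D (x) D_d (d <= k) have
   dimension d - 1 or d + 1, and D_(d+1) occurs exactly once.  In D (x) D_(k+1),
   reciprocity turns the copy of D_(k+1) in D (x) D_k into a coisometry X onto
   D_k, whose kernel has dimension k + 2.  A minimal invariant subspace W of
   that kernel cannot have dimension <= k: it would then be a copy of D_k
   orthogonal to the image of X^*, against the multiplicity one of D_(k+1) in
   D (x) D_k.  Nor can it have dimension k + 1, as its complement in the kernel
   would be a smaller invariant subspace.  Hence W is a copy of D_(k+2) and
   D (x) D_(k+1) = D_k (+) D_(k+2). *)

Section Adjoint.
Variable R : realType.
Local Notation C := (R[i]).

Lemma adjmxE m n (A : 'M[C]_(m, n)) i j : adjmx A i j = (A j i)^*.
Proof. by rewrite /adjmx !mxE. Qed.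

Lemma adjmx_trC m n (A : 'M[C]_(m, n)) : adjmx A = map_mx conjC A^T.
Proof. by apply/matrixP=> i j; rewrite adjmxE !mxE. Qed.

Lemma adjmxK m n (A : 'M[C]_(m, n)) : adjmx (adjmx A) = A.
Proof. by apply/matrixP=> i j; rewrite !adjmxE conjCK. Qed.

Lemma adjmxM m n p (A : 'M[C]_(m, n)) (B : 'M[C]_(n, p)) :
  adjmx (A *m B) = adjmx B *m adjmx A.
Proof.
apply/matrixP=> i j; rewrite adjmxE !mxE rmorph_sum; apply: eq_bigr => k _.
by rewrite !adjmxE rmorphM mulrC.
Qed.

Lemma adjmx1 n : adjmx (1%:M : 'M[C]_n) = 1%:M.
Proof. by apply/matrixP=> i j; rewrite adjmxE !mxE eq_sym rmorph_nat. Qed.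

Lemma adjmx0 m n : adjmx (0 : 'M[C]_(m, n)) = 0.
Proof. by apply/matrixP=> i j; rewrite adjmxE !mxE rmorph0. Qed.

Lemma adjmxZ m n c (A : 'M[C]_(m, n)) : adjmx (c *: A) = c^* *: adjmx A.
Proof. by apply/matrixP=> i j; rewrite !mxE rmorphM. Qed.

Lemma adjmx_eq0 m n (A : 'M[C]_(m, n)) : (adjmx A == 0) = (A == 0).
Proof.
apply/eqP/eqP=> [A'0|->]; last exact: adjmx0.
by rewrite -[A]adjmxK A'0 adjmx0.
Qed.

Lemma adjmx_trmx m n (A : 'M[C]_(m, n)) : adjmx A^T = (adjmx A)^T.
Proof. by apply/matrixP=> i j; rewrite !mxE. Qed.

Lemma adjmx_conj m n (A : 'M[C]_(m, n)) :
  adjmx (map_mx conjC A) = map_mx conjC (adjmx A).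
Proof. by apply/matrixP=> i j; rewrite !mxE. Qed.

Lemma adjmx_col_mx m1 m2 n (A : 'M[C]_(m1, n)) (B : 'M[C]_(m2, n)) :
  adjmx (col_mx A B) = row_mx (adjmx A) (adjmx B).
Proof. by rewrite !adjmx_trC tr_col_mx map_row_mx. Qed.

Lemma adjmx_tensmx m n p q (A : 'M[C]_(m, n)) (B : 'M[C]_(p, q)) :
  adjmx (tensmx A B) = tensmx (adjmx A) (adjmx B).
Proof. by rewrite /adjmx map_mxT trmx_tens. Qed.

Lemma mxrank_adjmx m n (A : 'M[C]_(m, n)) : \rank (adjmx A) = \rank A.
Proof. by rewrite adjmx_trC mxrank_map mxrank_tr. Qed.

Lemma tensmx1 m n : tensmx (1%:M : 'M[C]_m) (1%:M : 'M[C]_n) = 1%:M.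
Proof.
apply/matrixP=> i j; case: (mxtens_indexP i) => i1 i2.
case: (mxtens_indexP j) => j1 j2; rewrite tensmxE !mxE.
by rewrite (can_eq (@mxtens_indexK m n)) xpair_eqE -natrM mulnb.
Qed.

Lemma scalar_mx1_neq0 n : (0 < n)%N -> (1%:M : 'M[C]_n) != 0.
Proof. by move=> n_gt0; rewrite -mxrank_eq0 mxrank1 -lt0n. Qed.

Lemma mulmx_adjmx_diag_gt0 m n (A : 'M[C]_(m, n)) i j :
  A i j != 0 -> 0 < (A *m adjmx A) i i.
Proof.
move=> Aij_neq0; rewrite mxE (bigD1 j) //= ltr_wpDr ?sumr_ge0 //.
  by move=> k _; rewrite adjmxE mul_conjC_ge0.
by rewrite adjmxE mul_conjC_gt0.
Qed.

Lemma mulmx_adjmx_eq0 m n (A : 'M[C]_(m, n)) : A *m adjmx A = 0 -> A = 0.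
Proof.
move=> AA0; apply/eqP/negPn/negP => /matrix0Pn [i [j Aij_neq0]].
by have := mulmx_adjmx_diag_gt0 Aij_neq0; rewrite AA0 mxE ltxx.
Qed.

Lemma mxrank_isometry m n (E : 'M[C]_(m, n)) :
  adjmx E *m E = 1%:M -> \rank E = n.
Proof.
move=> EE1; apply/eqP; rewrite eqn_leq rank_leq_col /=.
by rewrite -[X in (X <= _)%N](mxrank1 C n) -EE1 mxrankM_maxr.
Qed.

Lemma coisometry_neq0 m n (A : 'M[C]_(m, n)) :
  (0 < m)%N -> A *m adjmx A = 1%:M -> A != 0.
Proof.
move=> m_gt0 AA1; apply: contraTneq (scalar_mx1_neq0 m_gt0) => A0.
by rewrite negbK -AA1 A0 mul0mx.
Qed.

Lemma submx_kermx_adjmx_eq0 m n p (W : 'M[C]_(m, n)) (U : 'M[C]_(p, n)) :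
  (U <= W)%MS -> (U <= kermx (adjmx W))%MS -> U = 0.
Proof.
case/submxP => D -> /sub_kermxP WW0.
by apply: mulmx_adjmx_eq0; rewrite adjmxM mulmxA WW0 mul0mx.
Qed.

(* [kermx (adjmx W)] is the orthogonal complement of the row space of [W]. *)
Lemma mxrank_cap_kermx_adjmx m p n (V : 'M[C]_(m, n)) (W : 'M[C]_(p, n)) :
  (W <= V)%MS ->
  \rank (V :&: kermx (adjmx W))%MS = (\rank V - \rank W)%N.
Proof.
move=> sWV; set K := kermx (adjmx W).
have rK : \rank K = (n - \rank W)%N by rewrite mxrank_ker mxrank_adjmx.
have WK0 : (W :&: K = 0)%MS.
  exact: submx_kermx_adjmx_eq0 (capmxSl _ _) (capmxSr _ _).
have rWK : \rank (W + K)%MS = (\rank W + \rank K)%N.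
  by apply: mxrank_disjoint_sum; rewrite WK0.
have rVK : \rank (V + K)%MS = n.
  apply/eqP; rewrite eqn_leq rank_leq_col /=.
  have := mxrankS (addsmxS sWV (submx_refl K)); rewrite rWK rK.
  have := rank_leq_col W; lia.
have := mxrank_sum_cap V K; rewrite rVK rK.
have := rank_leq_col W; have := mxrankS sWV; lia.
Qed.

End Adjoint.

Section ComplexContinuity.
Variables (R : realType) (T : topologicalType).
Local Notation C := (R[i]).

Lemma continuous_cst (c : C) : continuous ((fun=> c) : T -> C^o).
Proof. by move=> x; apply: cst_continuous. Qed.

Lemma continuous_add (f h : T -> C^o) : continuous f -> continuous h ->
  continuous (fun x => f x + h x).
Proof. by move=> cf ch x; exact: (continuousD (cf x) (ch x)). Qed.

Lemma continuous_mul (f h : T -> C^o) : continuous f -> continuous h ->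
  continuous (fun x => f x * h x).
Proof. by move=> cf ch x; exact: (continuousM (cf x) (ch x)). Qed.

Lemma continuous_sum (I : finType) (F : I -> T -> C^o) :
  (forall i, continuous (F i)) -> continuous (fun x => \sum_i F i x).
Proof.
move=> cF; suff cs s : continuous (fun x => \sum_(i <- s) F i x) by exact: cs.
elim: s => [|i s IHs]; under eq_fun do rewrite ?big_nil ?big_cons.
  exact: continuous_cst.
exact: (continuous_add (cF i) IHs).
Qed.

Lemma conjC_continuous : continuous (conjC : C^o -> C^o).
Proof.
move=> x; apply/(@cvgrPdist_lt _ _ _ _ (nbhs_filter x)) => eps eps_gt0.
have := (@cvgrPdist_lt _ _ _ (nbhs x) (nbhs_filter x) id x).1 (@cvg_id _ (nbhs x)).
by move=> /(_ eps eps_gt0); apply: filterS => y; rewrite -rmorphB norm_conjC.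
Qed.

Lemma continuous_conjC (f : T -> C^o) : continuous f ->
  continuous (fun x => (f x)^*).
Proof. by move=> cf x; apply: continuous_comp; [exact: cf | exact: conjC_continuous]. Qed.

End ComplexContinuity.

Section PartialTranspose.
Variable R : realType.
Local Notation C := (R[i]).

Lemma sum_mxtens_index m n (F : 'I_(m * n) -> C) :
  \sum_(k < m * n) F k = \sum_(i < m) \sum_(j < n) F (mxtens_index (i, j)).
Proof.
rewrite pair_big /=.
apply: (reindex (fun p : 'I_m * 'I_n => mxtens_index (p.1, p.2))) => /=.
exists (@mxtens_unindex m n) => [[i j] _|k _] /=; first by rewrite mxtens_indexK.
by rewrite mxtens_unindexK.
Qed.

(* Moves the first tensor factor of the row index of [S] to the column index. *)
Definition ptrmx a b c (S : 'M[C]_(a * c, b)) : 'M[C]_(c, a * b) :=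
  \matrix_(i, j) S (mxtens_index ((mxtens_unindex j).1, i)) (mxtens_unindex j).2.

Lemma ptrmxE a b c (S : 'M[C]_(a * c, b)) i x y :
  ptrmx S i (mxtens_index (x, y)) = S (mxtens_index (x, i)) y.
Proof. by rewrite mxE mxtens_indexK. Qed.

Lemma ptrmxB a b c (S T : 'M[C]_(a * c, b)) k :
  ptrmx (S - k *: T) = ptrmx S - k *: ptrmx T.
Proof.
apply/matrixP => i j; case: (mxtens_indexP j) => x y.
by rewrite !mxE !mxtens_indexK.
Qed.

Lemma ptrmx_eq0 a b c (S : 'M[C]_(a * c, b)) : ptrmx S = 0 -> S = 0.
Proof.
move=> S'0; apply/matrixP => i j; case: (mxtens_indexP i) => x y.
by rewrite -ptrmxE S'0 !mxE.
Qed.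

Definition reciprocal a b c (Q : 'M[C]_a) (S : 'M[C]_(a * c, b)) :
  'M[C]_(c, a * b) := ptrmx S *m tensmx Q 1%:M.

Lemma reciprocalB a b c (Q : 'M[C]_a) (S T : 'M[C]_(a * c, b)) k :
  reciprocal Q (S - k *: T) = reciprocal Q S - k *: reciprocal Q T.
Proof. by rewrite /reciprocal ptrmxB mulmxBl scalemxAl. Qed.

Lemma reciprocal_eq0 a b c (Q : 'M[C]_a) (S : 'M[C]_(a * c, b)) :
  Q \in unitmx -> reciprocal Q S = 0 -> S = 0.
Proof.
move=> Q_unit S'0; apply: ptrmx_eq0.
have QQ1 : tensmx Q (1%:M : 'M[C]_b) *m tensmx (invmx Q) 1%:M = 1%:M.
  by rewrite tensmx_mul mulmxV // mulmx1 tensmx1.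
by rewrite -[ptrmx S]mulmx1 -QQ1 mulmxA -/(reciprocal Q S) S'0 mul0mx.
Qed.

End PartialTranspose.

Section UnitaryRepresentations.
Variable R : realType.
Local Notation C := (R[i]).
Variables (G : topologicalType) (mul : G -> G -> G) (inv : G -> G) (e : G).
Hypothesis G_group : is_compact_group mul inv e.

Definition intertwiner m n (rho : G -> 'M[C]_m) (sigma : G -> 'M[C]_n)
    (A : 'M[C]_(n, m)) := forall g, A *m rho g = sigma g *m A.

Definition conj_rep n (rho : G -> 'M[C]_n) g := map_mx conjC (rho g).

Definition sub_rep n (rho : G -> 'M[C]_n) d (E : 'M[C]_(n, d)) g :=
  adjmx E *m rho g *m E.

Lemma mul_invr g : mul g (inv g) = e.
Proof. by case: G_group => _ [_ [/(_ g) []]]. Qed.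

Lemma mul_invl g : mul (inv g) g = e.
Proof. by case: G_group => _ [_ [/(_ g) []]]. Qed.

Lemma urep_inv n (rho : G -> 'M[C]_n) g :
  is_urep mul e rho -> rho (inv g) = adjmx (rho g).
Proof.
case=> rho1 rhoM /(_ g) [_ rhoU] _.
by rewrite -[rho (inv g)]mul1mx -rhoU -mulmxA -rhoM mul_invr rho1 mulmx1.
Qed.

Lemma intertwiner_mul m n p (rho : G -> 'M[C]_m) (sigma : G -> 'M[C]_n)
    (tau : G -> 'M[C]_p) A B :
  intertwiner rho sigma A -> intertwiner sigma tau B ->
  intertwiner rho tau (B *m A).
Proof. by move=> iA iB g; rewrite -mulmxA iA !mulmxA iB. Qed.

Lemma intertwiner_adjmx m n (rho : G -> 'M[C]_m) (sigma : G -> 'M[C]_n) A :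
  is_urep mul e rho -> is_urep mul e sigma ->
  intertwiner rho sigma A -> intertwiner sigma rho (adjmx A).
Proof.
move=> urho usigma iA g.
have := iA (inv g); rewrite !urep_inv // => /(congr1 (@adjmx _ _ _)).
by rewrite !adjmxM !adjmxK.
Qed.

Lemma unitary_intertwiner_adjmx m n (rho : G -> 'M[C]_m)
    (sigma : G -> 'M[C]_n) P :
  unitary_mx P -> intertwiner rho sigma P -> intertwiner sigma rho (adjmx P).
Proof.
move=> [PP1 P'P1] iP g.
by rewrite -[LHS]mulmx1 -PP1 !mulmxA -(mulmxA (adjmx P)) -iP mulmxA P'P1 mul1mx.
Qed.

Lemma invariant_kermx_intertwiner m n (rho : G -> 'M[C]_m)
    (sigma : G -> 'M[C]_n) A :
  intertwiner rho sigma A -> invariant_subspace rho (kermx A^T).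
Proof.
move=> iA g; apply/sub_kermxP.
by rewrite -mulmxA -trmx_mul iA trmx_mul mulmxA mulmx_ker mul0mx.
Qed.

Lemma invariant_kermx_adjmx n (rho : G -> 'M[C]_n) m (W : 'M[C]_(m, n)) :
  is_urep mul e rho -> invariant_subspace rho W ->
  invariant_subspace rho (kermx (adjmx W)).
Proof.
move=> urho invW g; apply/sub_kermxP.
have /submxP [D WD] := invW (inv g).
have rhoW : (rho g)^T *m adjmx W = adjmx W *m adjmx D.
  by rewrite -adjmxM -WD adjmxM (urep_inv _ urho) adjmx_trmx adjmxK.
by rewrite -mulmxA rhoW mulmxA mulmx_ker mul0mx.
Qed.

Lemma invariant_cap n (rho : G -> 'M[C]_n) m p (U : 'M[C]_(m, n))
    (W : 'M[C]_(p, n)) :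
  invariant_subspace rho U -> invariant_subspace rho W ->
  invariant_subspace rho (U :&: W)%MS.
Proof.
move=> invU invW g; rewrite sub_capmx.
by rewrite (submx_trans _ (invU g)) ?(submx_trans _ (invW g))
  ?submxMr ?capmxSl ?capmxSr.
Qed.

Lemma schur_iso p q (rho : G -> 'M[C]_p) (sigma : G -> 'M[C]_q) A :
  irreducible_rep rho -> irreducible_rep sigma -> intertwiner rho sigma A ->
  A != 0 -> p = q /\ \rank A = p.
Proof.
move=> [_ irr_rho] [_ irr_sigma] iA A_neq0.
have rA_neq0 : \rank A != 0%N by rewrite mxrank_eq0.
have inv_im : invariant_subspace sigma A^T.
  by move=> g; rewrite -trmx_mul -iA trmx_mul submxMl.
have rker := mxrank_ker A^T; rewrite mxrank_tr in rker.
have := rank_leq_col A.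
case: (irr_sigma _ _ inv_im); rewrite mxrank_tr => rAq; first by lia.
by case: (irr_rho _ _ (invariant_kermx_intertwiner iA)); rewrite rker; lia.
Qed.

Lemma schur_scalar n (rho : G -> 'M[C]_n) A :
  irreducible_rep rho -> intertwiner rho rho A -> exists c, A = c%:M.
Proof.
move=> irr_rho iA; have [n_gt0 _] := irr_rho.
have [c] := eigenvalue_closed A n_gt0.
rewrite /eigenvalue /eigenspace -mxrank_eq0 mxrank_ker => r_neq0.
exists c; apply/eqP; rewrite -subr_eq0; apply: contraTT r_neq0 => B_neq0.
have iB : intertwiner rho rho (A - c%:M).
  by move=> g; rewrite mulmxBl mulmxBr iA scalar_mxC.
by have [_ ->] := schur_iso irr_rho irr_rho iB B_neq0; rewrite subnn.
Qed.

Lemma schur_proportional p q (rho : G -> 'M[C]_p) (sigma : G -> 'M[C]_q) A B :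
  irreducible_rep rho -> irreducible_rep sigma -> intertwiner rho sigma A ->
  intertwiner rho sigma B -> A != 0 -> exists c, B = c *: A.
Proof.
move=> irr_rho irr_sigma iA iB A_neq0.
have [epq rA] := schur_iso irr_rho irr_sigma iA A_neq0; subst q.
have A_unit : A \in unitmx by rewrite -row_free_unit /row_free rA.
have iA' : intertwiner sigma rho (invmx A).
  move=> g; rewrite -[LHS]mulmx1 -(mulmxV A_unit) !mulmxA -(mulmxA (invmx A)).
  by rewrite -iA mulmxA mulVmx // mul1mx.
have [c Ac] := schur_scalar irr_rho (intertwiner_mul iB iA').
by exists c; rewrite -[B](mulKVmx A_unit) Ac mul_mx_scalar.
Qed.

Lemma intertwiner_coisometry p q (rho : G -> 'M[C]_p) (sigma : G -> 'M[C]_q) A :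
  is_urep mul e rho -> is_urep mul e sigma -> irreducible_rep sigma ->
  intertwiner rho sigma A -> A != 0 ->
  exists B, intertwiner rho sigma B /\ B *m adjmx B = 1%:M.
Proof.
move=> urho usigma irr_sigma iA /matrix0Pn [i [j Aij_neq0]].
have iAA : intertwiner sigma sigma (A *m adjmx A).
  exact: intertwiner_mul (intertwiner_adjmx urho usigma iA) iA.
have [c AAc] := schur_scalar irr_sigma iAA.
have c_gt0 : 0 < c.
  by have := mulmx_adjmx_diag_gt0 Aij_neq0; rewrite AAc mxE eqxx mulr1n.
have s_gt0 : 0 < (sqrtC c)^-1 by rewrite invr_gt0 sqrtC_gt0.
exists ((sqrtC c)^-1 *: A); split.
  by move=> g; rewrite -scalemxAl iA scalemxAr.
rewrite adjmxZ -scalemxAl -scalemxAr scalerA AAc scale_scalar_mx.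
by rewrite geC0_conj ?ltW // -expr2 exprVn sqrtCK mulVf ?gt_eqF.
Qed.

Lemma urep_continuous_entry n (rho : G -> 'M[C]_n) m p (A : 'M[C]_(m, n))
    (B : 'M[C]_(n, p)) i j :
  is_urep mul e rho -> continuous ((fun g => (A *m rho g *m B) i j) : G -> C^o).
Proof.
case=> _ _ _ rho_cont; under eq_fun do rewrite mxE.
apply: continuous_sum => k; apply: continuous_mul; last exact: continuous_cst.
under eq_fun do rewrite mxE.
by apply: continuous_sum => l; apply: continuous_mul; [exact: continuous_cst|].
Qed.

Lemma urep_tens m n (rho : G -> 'M[C]_m) (sigma : G -> 'M[C]_n) :
  is_urep mul e rho -> is_urep mul e sigma -> is_urep mul e (tens_rep rho sigma).
Proof.
move=> [rho1 rhoM rhoU rho_cont] [sigma1 sigmaM sigmaU sigma_cont]; split.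
- by rewrite /tens_rep rho1 sigma1 tensmx1.
- by move=> g h; rewrite /tens_rep rhoM sigmaM tensmx_mul.
- move=> g; have [r1 r2] := rhoU g; have [s1 s2] := sigmaU g.
  by rewrite /tens_rep /unitary_mx adjmx_tensmx !tensmx_mul r1 r2 s1 s2 tensmx1.
- move=> i j; case: (mxtens_indexP i) => i1 i2; case: (mxtens_indexP j) => j1 j2.
  by rewrite /tens_rep; under eq_fun do rewrite tensmxE; exact: continuous_mul.
Qed.

Lemma intertwiner_dsum a b c (rho : G -> 'M[C]_a) (sigma : G -> 'M[C]_b)
    (tau : G -> 'M[C]_c) T :
  intertwiner (dsum_rep rho sigma) tau T ->
  intertwiner rho tau (lsubmx T) /\ intertwiner sigma tau (rsubmx T).
Proof.
move=> iT; split => g; have := iT g;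
  rewrite -[T in LHS]hsubmxK -[T in RHS]hsubmxK /dsum_rep mul_row_block
    !mulmx0 addr0 add0r mul_mx_row => /eq_row_mx [] //.
Qed.

Lemma irrep_conj_rep n (rho : G -> 'M[C]_n) :
  irrep mul e rho -> irrep mul e (conj_rep rho).
Proof.
move=> [[rho1 rhoM rhoU rho_cont] [n_gt0 irr_rho]]; split; last split => //.
  split.
  - by rewrite /conj_rep rho1 map_mx1.
  - by move=> g h; rewrite /conj_rep rhoM map_mxM.
  - move=> g; have [r1 r2] := rhoU g.
    by rewrite /conj_rep /unitary_mx adjmx_conj -!map_mxM r1 r2 map_mx1.
  - by move=> i j; under eq_fun do rewrite mxE; exact: continuous_conjC.
move=> m W invW; rewrite -(mxrank_map conjC W); apply: irr_rho => g.
by have := invW g; rewrite -(map_submx conjC) map_mxM /conj_rep map_trmx map_mxCK.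
Qed.

Lemma intertwiner_reciprocal a b c (rho : G -> 'M[C]_a) (sigma : G -> 'M[C]_b)
    (tau : G -> 'M[C]_c) Q S :
  is_urep mul e rho -> intertwiner rho (conj_rep rho) Q ->
  intertwiner sigma (tens_rep rho tau) S ->
  intertwiner (tens_rep rho sigma) tau (reciprocal Q S).
Proof.
move=> [_ _ rhoU _] iQ iS g.
suff iS' : intertwiner (tens_rep (conj_rep rho) sigma) tau (ptrmx S).
  rewrite /reciprocal -mulmxA /tens_rep tensmx_mul mul1mx iQ.
  rewrite -(mulmx1 (sigma g)) -tensmx_mul [LHS]mulmxA [RHS]mulmxA.
  by have := iS' g; rewrite /tens_rep => ->.
(* Entrywise, [S *m sigma h] is [rho h] acting on the first tensor factor of a
   vector [K]; transposing that factor turns [rho h] into [adjmx (rho h)]. *)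
move=> h; apply/matrixP => i j; case: (mxtens_indexP j) => x y.
pose K : 'cV[C]_a := \col_x' \sum_(k < c) tau h i k * S (mxtens_index (x', k)) y.
have Srho x' : (S *m sigma h) (mxtens_index (x', i)) y = (rho h *m K) x' 0.
  rewrite iS mxE sum_mxtens_index mxE; apply: eq_bigr => x'' _.
  rewrite !mxE mulr_sumr; apply: eq_bigr => k _.
  by rewrite tensmxE mulrA.
transitivity ((adjmx (rho h) *m (rho h *m K)) x 0).
  rewrite mxE sum_mxtens_index mxE; apply: eq_bigr => x' _.
  rewrite adjmxE -Srho [in RHS]mxE mulr_sumr; apply: eq_bigr => y' _.
  by rewrite ptrmxE tensmxE !mxE mulrCA.
rewrite mulmxA (rhoU h).2 mul1mx !mxE; apply: eq_bigr => k _.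
by rewrite ptrmxE.
Qed.

Lemma urep_sub_rep n (rho : G -> 'M[C]_n) d (E : 'M[C]_(n, d)) :
  is_urep mul e rho -> adjmx E *m E = 1%:M ->
  intertwiner (sub_rep rho E) rho E -> is_urep mul e (sub_rep rho E).
Proof.
move=> urho EE1 iE; have [rho1 rhoM _ _] := urho.
have subM g h : sub_rep rho E (mul g h) = sub_rep rho E g *m sub_rep rho E h.
  by rewrite [sub_rep rho E g]/sub_rep -mulmxA iE /sub_rep rhoM !mulmxA.
have sub1 : sub_rep rho E e = 1%:M by rewrite /sub_rep rho1 mulmx1.
split => //.
- move=> g; have subV : adjmx (sub_rep rho E g) = sub_rep rho E (inv g).
    by rewrite /sub_rep !adjmxM adjmxK (urep_inv _ urho) mulmxA.
  by rewrite /unitary_mx subV -!subM mul_invr mul_invl.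
- by move=> i j; exact: urep_continuous_entry.
Qed.

Lemma sub_rep_basis n (rho : G -> 'M[C]_n) m (W : 'M[C]_(m, n)) :
  invariant_subspace rho W ->
  exists E : 'M[C]_(n, \rank W), [/\ adjmx E *m E = 1%:M, (E^T :=: W)%MS &
    intertwiner (sub_rep rho E) rho E].
Proof.
move=> invW; set F := schmidt (row_base W).
have FF1 : F *m adjmx F = 1%:M.
  by rewrite adjmx_trC; apply/unitarymxP/schmidt_unitarymx/rank_leq_col.
have FW : (F :=: W)%MS.
  exact: eqmx_trans (eqmx_schmidt_free (row_base_free W)) (eq_row_base W).
have EE1 : adjmx F^T *m F^T = 1%:M.
  by apply: trmx_inj; rewrite trmx_mul trmxK adjmx_trmx trmxK FF1 trmx1.
exists F^T; split; rewrite ?trmxK //.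
move=> g; have /submxP [D FD] : (F *m (rho g)^T <= F)%MS.
  by rewrite FW (submx_trans _ (invW g)) // submxMr // FW.
have rhoF : rho g *m F^T = F^T *m D^T.
  by apply: trmx_inj; rewrite !trmx_mul !trmxK FD.
by rewrite /sub_rep -!mulmxA rhoF (mulmxA (adjmx F^T)) EE1 mul1mx.
Qed.

Lemma irreducible_sub_rep n (rho : G -> 'M[C]_n) d (E : 'M[C]_(n, d)) :
  adjmx E *m E = 1%:M -> intertwiner (sub_rep rho E) rho E -> (0 < d)%N ->
  (forall m (W : 'M[C]_(m, n)), invariant_subspace rho W -> (W <= E^T)%MS ->
     (0 < \rank W)%N -> (d <= \rank W)%N) ->
  irreducible_rep (sub_rep rho E).
Proof.
move=> EE1 iE d_gt0 minE; split => // m V invV.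
have invVE : invariant_subspace rho (V *m E^T).
  by move=> g; rewrite -mulmxA -trmx_mul -iE trmx_mul mulmxA submxMr.
have E_free : row_free E^T.
  by rewrite /row_free mxrank_tr (mxrank_isometry EE1).
have := minE _ _ invVE (submxMl _ _); rewrite mxrankMfree // => minV.
case: (posnP (\rank V)) => [|rV_gt0]; [by left | right].
by apply/eqP; rewrite eqn_leq rank_leq_col minV.
Qed.

Lemma ex_minimal_invariant_submx n (rho : G -> 'M[C]_n) m (V : 'M[C]_(m, n)) :
  invariant_subspace rho V -> (0 < \rank V)%N ->
  exists p (W : 'M[C]_(p, n)),
    [/\ invariant_subspace rho W, (W <= V)%MS, (0 < \rank W)%N &
      forall q (W' : 'M[C]_(q, n)), invariant_subspace rho W' -> (W' <= V)%MS ->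
        (0 < \rank W')%N -> (\rank W <= \rank W')%N].
Proof.
move=> invV rV_gt0.
pose has_rank r := exists p (W : 'M[C]_(p, n)),
  [/\ invariant_subspace rho W, (W <= V)%MS, (0 < \rank W)%N & \rank W = r].
have [|r /asboolP [p [W [invW sWV rW_gt0 rW]]] r_min] := ex_minnP (P := fun r =>
    `[< has_rank r >]).
  by exists (\rank V); apply/asboolP; exists m, V; split.
exists p, W; split => // q W' invW' sW'V rW'_gt0; rewrite rW.
by apply: r_min; apply/asboolP; exists q, W'.
Qed.

Lemma rep_equiv_dsum n m p (rho : G -> 'M[C]_n) (sigma : G -> 'M[C]_m)
    (tau : G -> 'M[C]_p) X Y :
  (m + p)%N = n -> intertwiner rho sigma X -> intertwiner rho tau Y ->
  X *m adjmx X = 1%:M -> Y *m adjmx Y = 1%:M -> X *m adjmx Y = 0 ->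
  rep_equiv rho (dsum_rep sigma tau).
Proof.
move=> mpn iX iY XX1 YY1 XY0; subst n.
have YX0 : Y *m adjmx X = 0 by rewrite -[LHS]adjmxK adjmxM adjmxK XY0 adjmx0.
have PP1 : col_mx X Y *m adjmx (col_mx X Y) = 1%:M.
  by rewrite adjmx_col_mx mul_col_row XX1 YY1 XY0 YX0 -scalar_mx_block.
exists (col_mx X Y); split; first by split; last exact: mulmx1C.
move=> g; rewrite mul_col_mx iX iY /dsum_rep mul_block_col !mul0mx.
by rewrite addr0 add0r.
Qed.

Definition constituent_dims n (rho : G -> 'M[C]_n) (P : pred nat) :=
  forall q (sigma : G -> 'M[C]_q) T, irrep mul e sigma ->
    intertwiner rho sigma T -> T != 0 -> q \in P.

Definition multiplicity_one n (rho : G -> 'M[C]_n) q :=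
  forall sigma : G -> 'M[C]_q, irrep mul e sigma ->
    (exists2 T, intertwiner rho sigma T & T != 0) /\
    (forall T1 T2, intertwiner rho sigma T1 -> intertwiner rho sigma T2 ->
       T1 != 0 -> exists c, T2 = c *: T1).

Lemma constituent_dimsW n (rho : G -> 'M[C]_n) (P P' : pred nat) :
  {subset P <= P'} -> constituent_dims rho P -> constituent_dims rho P'.
Proof. by move=> sPP' dims q sigma T irr_sigma iT /(dims _ _ _ irr_sigma iT) /sPP'. Qed.

Lemma constituent_dims_equiv n n' (rho : G -> 'M[C]_n) (rho' : G -> 'M[C]_n') P :
  rep_equiv rho rho' -> constituent_dims rho' P -> constituent_dims rho P.
Proof.
move=> [U [[UU1 U'U1] iU]] dims' q sigma T irr_sigma iT T_neq0.
have iU' := unitary_intertwiner_adjmx (conj UU1 U'U1) iU.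
apply: dims' irr_sigma (intertwiner_mul iU' iT) _.
by apply: contraNneq T_neq0 => TU0; rewrite -[T]mulmx1 -U'U1 mulmxA TU0 mul0mx.
Qed.

Lemma multiplicity_one_equiv n n' (rho : G -> 'M[C]_n) (rho' : G -> 'M[C]_n') q :
  rep_equiv rho rho' -> multiplicity_one rho' q -> multiplicity_one rho q.
Proof.
move=> [U [[UU1 U'U1] iU]] mult' sigma irr_sigma.
have iU' := unitary_intertwiner_adjmx (conj UU1 U'U1) iU.
have [[T iT T_neq0] propT] := mult' sigma irr_sigma.
have UK (T' : 'M[C]_(q, n)) : T' = T' *m adjmx U *m U.
  by rewrite -mulmxA U'U1 mulmx1.
split.
  exists (T *m U); first exact: intertwiner_mul iU iT.
  by apply: contraNneq T_neq0 => TU0; rewrite -[T]mulmx1 -UU1 mulmxA TU0 mul0mx.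
move=> T1 T2 iT1 iT2 T1_neq0.
have [|c T2c] := propT _ _ (intertwiner_mul iU' iT1) (intertwiner_mul iU' iT2).
  by apply: contraNneq T1_neq0 => T1U0; rewrite [T1]UK T1U0 mul0mx.
by exists c; rewrite [T2]UK T2c -scalemxAl -UK.
Qed.

Lemma constituent_dims_irreducible n (rho : G -> 'M[C]_n) :
  irreducible_rep rho -> constituent_dims rho (pred1 n).
Proof.
move=> irr_rho q sigma T [_ irr_sigma] iT T_neq0.
by have [nq _] := schur_iso irr_rho irr_sigma iT T_neq0; rewrite inE nq.
Qed.

Lemma multiplicity_one_irreducible n (rho : G -> 'M[C]_n) :
  irreducible_rep rho ->
  (forall rho' : G -> 'M[C]_n, irrep mul e rho' -> rep_equiv rho rho') ->
  multiplicity_one rho n.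
Proof.
move=> irr_rho equiv_rho sigma irr_sigma; split; last first.
  by move=> T1 T2 iT1 iT2; apply: schur_proportional irr_rho irr_sigma.2 iT1 iT2.
have [U [[UU1 _] iU]] := equiv_rho _ irr_sigma.
by exists U => //; apply: coisometry_neq0 UU1; case: irr_rho.
Qed.

Lemma constituent_dims_dsum m p (rho : G -> 'M[C]_m) (sigma : G -> 'M[C]_p) :
  irreducible_rep rho -> irreducible_rep sigma ->
  constituent_dims (dsum_rep rho sigma) [pred q | (q == m) || (q == p)].
Proof.
move=> irr_rho irr_sigma q tau T [_ irr_tau] /intertwiner_dsum [iTl iTr] T_neq0.
move: T_neq0; rewrite -[T]hsubmxK row_mx_eq0 negb_and /=.
case/orP => [Tl_neq0 | Tr_neq0].
  by have [mq _] := schur_iso irr_rho irr_tau iTl Tl_neq0; rewrite inE mq eqxx.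
by have [pq _] := schur_iso irr_sigma irr_tau iTr Tr_neq0; rewrite inE pq eqxx orbT.
Qed.

Lemma multiplicity_one_dsum m p (rho : G -> 'M[C]_m) (sigma : G -> 'M[C]_p) :
  m != p -> irreducible_rep rho -> irreducible_rep sigma ->
  (forall sigma' : G -> 'M[C]_p, irrep mul e sigma' -> rep_equiv sigma sigma') ->
  multiplicity_one (dsum_rep rho sigma) p.
Proof.
move=> mp irr_rho irr_sigma equiv_sigma tau irr_tau.
have lsub0 T : intertwiner (dsum_rep rho sigma) tau T -> lsubmx T = 0.
  move=> /intertwiner_dsum [iTl _]; apply/eqP; apply: contraNT mp => Tl_neq0.
  by have [mp' _] := schur_iso irr_rho irr_tau.2 iTl Tl_neq0; rewrite mp'.
split.
  have [[U iU U_neq0] _] := multiplicity_one_irreducible irr_sigma equiv_sigma irr_tau.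
  exists (row_mx 0 U); last by rewrite row_mx_eq0 eqxx.
  move=> g; rewrite /dsum_rep mul_row_block !mulmx0 !mul0mx addr0 add0r.
  by rewrite mul_mx_row mulmx0 iU.
move=> T1 T2 iT1 iT2; rewrite -[T1]hsubmxK (lsub0 _ iT1) row_mx_eq0 eqxx /=.
move=> T1r_neq0; have [_ iT1r] := intertwiner_dsum iT1.
have [_ iT2r] := intertwiner_dsum iT2.
have [c T2c] := schur_proportional irr_sigma irr_tau.2 iT1r iT2r T1r_neq0.
by exists c; rewrite -[T2]hsubmxK (lsub0 _ iT2) T2c scale_row_mx scaler0.
Qed.

End UnitaryRepresentations.

Section UniqueIrreducibles.
Variable R : realType.
Local Notation C := (R[i]).
Variables (G : topologicalType) (mul : G -> G -> G) (inv : G -> G) (e : G).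
Hypothesis G_group : is_compact_group mul inv e.
Hypothesis unique_irreps : forall n : nat, (0 < n)%N ->
  (exists rho : G -> 'M[C]_n, irrep mul e rho) /\
  (forall rho sigma : G -> 'M[C]_n,
     irrep mul e rho -> irrep mul e sigma -> rep_equiv rho sigma).

Local Notation irrep := (irrep mul e).
Local Notation constituent_dims := (constituent_dims mul e).
Local Notation multiplicity_one := (multiplicity_one mul e).

Lemma irrep_equiv p q (rho : G -> 'M[C]_p) (sigma : G -> 'M[C]_q) :
  irrep rho -> irrep sigma -> p = q -> rep_equiv rho sigma.
Proof.
move=> irr_rho irr_sigma epq; case: q / epq in sigma irr_sigma *.
by apply: (unique_irreps _).2 => //; case: irr_rho => _ [].
Qed.

Lemma ex_irrep n : (0 < n)%N -> exists rho : G -> 'M[C]_n, irrep rho.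
Proof. by move=> n_gt0; case: (unique_irreps n_gt0). Qed.

Lemma irrep_self_conjugate n (rho : G -> 'M[C]_n) :
  irrep rho -> exists2 Q, Q \in unitmx & intertwiner rho (conj_rep rho) Q.
Proof.
move=> irr_rho.
have [Q [[QQ1 _] iQ]] := irrep_equiv irr_rho (irrep_conj_rep irr_rho) erefl.
by exists Q => //; case/mulmx1_unit: QQ1.
Qed.

Definition tensor_rule d := forall (Dh : G -> 'M[C]_2) (Dd : G -> 'M[C]_d),
  irrep Dh -> irrep Dd ->
  constituent_dims (tens_rep Dh Dd) [pred q | (q == d.+1) || (q.+1 == d)] /\
  multiplicity_one (tens_rep Dh Dd) d.+1.

Definition clebsch_gordan k := forall (Dh : G -> 'M[C]_2) (Dj : G -> 'M[C]_k.+1)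
    (Dm : G -> 'M[C]_k) (Dp : G -> 'M[C]_k.+2),
  irrep Dh -> irrep Dj -> irrep Dm -> irrep Dp ->
  rep_equiv (tens_rep Dh Dj) (dsum_rep Dm Dp).

(* The one-dimensional irreducible representation is trivial. *)
Lemma clebsch_gordan_trivial (Dh : G -> 'M[C]_2) (D0 : G -> 'M[C]_1) :
  irrep Dh -> irrep D0 -> rep_equiv (tens_rep Dh D0) Dh.
Proof.
move=> irr_Dh irr_D0.
have irr_triv : irrep (fun=> 1%:M : 'M[C]_1).
  split; first split => //.
  - by move=> g h; rewrite mulmx1.
  - by move=> g; rewrite /unitary_mx adjmx1 mulmx1.
  - by move=> i j; exact: continuous_cst.
  split => // m W _; have := rank_leq_col W.
  by case: (\rank W) => [|[|]] //; [left | right].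
have [U [[UU1 _] iU]] := irrep_equiv irr_triv irr_D0 erefl.
have D0_1 g : D0 g = 1%:M by rewrite -[D0 g]mulmx1 -UU1 mulmxA -iU mulmx1.
exists 1%:M; split; first by split; rewrite adjmx1 mulmx1.
by move=> g; rewrite /tens_rep D0_1 tens_mx_scalar scale1r castmx_id mul1mx mulmx1.
Qed.

Lemma tensor_rule_one : tensor_rule 1.
Proof.
move=> Dh D0 irr_Dh irr_D0; have equiv := clebsch_gordan_trivial irr_Dh irr_D0.
split.
  apply: constituent_dims_equiv equiv _.
  apply: constituent_dimsW (constituent_dims_irreducible irr_Dh.2).
  by move=> q; rewrite !inE => ->.
apply: multiplicity_one_equiv equiv _.
apply: multiplicity_one_irreducible irr_Dh.2 _ => Dh' irr_Dh'.
exact: irrep_equiv.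
Qed.

Lemma tensor_rule_succ k : (0 < k)%N -> clebsch_gordan k -> tensor_rule k.+1.
Proof.
move=> k_gt0 cg Dh Dd irr_Dh irr_Dd.
have [Dm irr_Dm] := ex_irrep k_gt0.
have [Dp irr_Dp] := ex_irrep (isT : (0 < k.+2)%N).
have equiv := cg Dh Dd Dm Dp irr_Dh irr_Dd irr_Dm irr_Dp.
split.
  apply: constituent_dims_equiv equiv _.
  apply: constituent_dimsW (constituent_dims_dsum irr_Dm.2 irr_Dp.2).
  by move=> q; rewrite !inE => /orP [] /eqP ->; rewrite eqxx ?orbT.
apply: multiplicity_one_equiv equiv _.
apply: multiplicity_one_dsum irr_Dm.2 irr_Dp.2 _ => [|Dp' irr_Dp'].
  by lia.
exact: irrep_equiv.
Qed.

Section ClebschGordanStep.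
Variable k : nat.
Hypothesis k_gt0 : (0 < k)%N.
Hypothesis tensor_rule_below : forall d, (0 < d)%N -> (d <= k)%N -> tensor_rule d.
Variables (Dh : G -> 'M[C]_2) (Dj : G -> 'M[C]_k.+1).
Variables (Dm : G -> 'M[C]_k) (Dp : G -> 'M[C]_k.+2).
Hypotheses (irr_Dh : irrep Dh) (irr_Dj : irrep Dj).
Hypotheses (irr_Dm : irrep Dm) (irr_Dp : irrep Dp).

Local Notation V := (tens_rep Dh Dj).

Lemma urep_V : is_urep mul e V.
Proof. exact: urep_tens irr_Dh.1 irr_Dj.1. Qed.

Lemma lower_coisometry : exists X : 'M[C]_(k, 2 * k.+1),
  [/\ intertwiner V Dm X, X *m adjmx X = 1%:M &
      forall U, intertwiner Dm V U -> exists c, U = c *: adjmx X].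
Proof.
have [Q Q_unit iQ] := irrep_self_conjugate irr_Dh.
have [_ mult_Dj] := tensor_rule_below k_gt0 (leqnn k) irr_Dh irr_Dm.
have [[T iT T_neq0] propT] := mult_Dj Dj irr_Dj.
have uDhDm := urep_tens irr_Dh.1 irr_Dm.1.
have iT' := intertwiner_adjmx G_group uDhDm irr_Dj.1 iT.
have iX0 := intertwiner_reciprocal irr_Dh.1 iQ iT'.
have [|X [iX XX1]] := intertwiner_coisometry G_group urep_V irr_Dm.1 irr_Dm.2 iX0.
  by apply: contraNneq T_neq0 => /(reciprocal_eq0 Q_unit) /eqP; rewrite adjmx_eq0.
exists X; split => // U iU.
have iX' := intertwiner_adjmx G_group urep_V irr_Dm.1 iX.
have iX'' := intertwiner_reciprocal irr_Dh.1 iQ iX'.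
have [|c Uc] := propT _ _ iX'' (intertwiner_reciprocal irr_Dh.1 iQ iU).
  apply: contraNneq (coisometry_neq0 k_gt0 XX1).
  by move=> /(reciprocal_eq0 Q_unit) /eqP; rewrite adjmx_eq0.
exists c; apply/eqP; rewrite -subr_eq0; apply/eqP/(reciprocal_eq0 Q_unit).
by rewrite reciprocalB Uc subrr.
Qed.

(* Multiplicity one of [Dj] in [Dh (x) Dm] rules out a copy of [Dm] orthogonal to [X]. *)
Lemma no_lower_subrep (X : 'M[C]_(k, 2 * k.+1)) d (rho : G -> 'M[C]_d) E :
  X *m adjmx X = 1%:M -> (forall U, intertwiner Dm V U -> exists c, U = c *: adjmx X) ->
  irrep rho -> (d <= k)%N -> intertwiner rho V E -> adjmx E *m E = 1%:M ->
  X *m E = 0 -> False.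
Proof.
move=> XX1 X_unique irr_rho dk iE EE1 XE0.
have d_gt0 : (0 < d)%N by case: irr_rho => _ [].
have E_neq0 : E != 0.
  by rewrite -adjmx_eq0; apply: coisometry_neq0 d_gt0 _; rewrite adjmxK.
have [Q Q_unit iQ] := irrep_self_conjugate irr_Dh.
have [dims _] := tensor_rule_below d_gt0 dk irr_Dh irr_rho.
have : k.+1 \in [pred q | (q == d.+1) || (q.+1 == d)].
  apply: dims _ _ _ irr_Dj (intertwiner_reciprocal irr_Dh.1 iQ iE) _.
  by apply: contraNneq E_neq0 => /(reciprocal_eq0 Q_unit) ->.
rewrite inE => /orP [/eqP [kd] | /eqP kd]; last by lia.
have [U [[UU1 U'U1] iU]] := irrep_equiv irr_rho irr_Dm (esym kd).
have iU' := unitary_intertwiner_adjmx (conj UU1 U'U1) iU.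
have [c EUc] := X_unique _ (intertwiner_mul iU' iE).
have c0 : c = 0.
  have : c *: (1%:M : 'M[C]_k) == 0.
    by rewrite -XX1 scalemxAr -EUc mulmxA XE0 mul0mx.
  by rewrite scaler_eq0 (negbTE (scalar_mx1_neq0 _ k_gt0)) orbF => /eqP.
by move: E_neq0; rewrite -[E]mulmx1 -U'U1 mulmxA EUc c0 scale0r mul0mx eqxx.
Qed.

Lemma tens_equiv_dsum : rep_equiv V (dsum_rep Dm Dp).
Proof.
have [X [iX XX1 X_unique]] := lower_coisometry.
set K := kermx X^T.
have rX : \rank X = k by rewrite -mxrank_adjmx (mxrank_isometry (n := k)) ?adjmxK.
have rK : \rank K = k.+2 by rewrite mxrank_ker mxrank_tr rX; lia.
have invK : invariant_subspace V K := invariant_kermx_intertwiner iX.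
have rK_gt0 : (0 < \rank K)%N by rewrite rK.
have [p [W [invW sWK rW_gt0 W_min]]] := ex_minimal_invariant_submx invK rK_gt0.
have [E [EE1 EW iE]] := sub_rep_basis invW.
have usub : is_urep mul e (sub_rep V E) := urep_sub_rep G_group urep_V EE1 iE.
have irr_sub : irrep (sub_rep V E).
  split => //.
  apply: irreducible_sub_rep EE1 iE rW_gt0 _ => m W' invW' sW'E.
  by apply: W_min invW' (submx_trans sW'E _); rewrite EW.
have XE0 : X *m E = 0.
  apply: trmx_inj; rewrite trmx_mul trmx0; apply/sub_kermxP.
  by rewrite EW.
have rW : \rank W = k.+2.
  have := mxrankS sWK; rewrite rK => rW_le.
  case: (ltngtP (\rank W) k.+1) => [rW_lt | rW_gt | rW_eq].
  - by case: (no_lower_subrep XX1 X_unique irr_sub rW_lt iE EE1 XE0).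
  - by lia.
  - (* the orthogonal complement of [W] in [K] is a smaller invariant subspace *)
    have invWc := invariant_kermx_adjmx G_group urep_V invW.
    have := W_min _ _ (invariant_cap invK invWc) (capmxSl _ _).
    by rewrite mxrank_cap_kermx_adjmx // rK rW_eq; lia.
have [U [[UU1 _] iU]] := irrep_equiv irr_sub irr_Dp rW.
have iY : intertwiner V Dp (U *m adjmx E).
  exact: intertwiner_mul (intertwiner_adjmx G_group usub urep_V iE) iU.
apply: rep_equiv_dsum (_ : (k + k.+2)%N = (2 * k.+1)%N) iX iY XX1 _ _.
- by lia.
- by rewrite adjmxM adjmxK mulmxA -(mulmxA U) EE1 mulmx1.
- by rewrite adjmxM adjmxK mulmxA XE0 mul0mx.
Qed.

End ClebschGordanStep.

Lemma clebsch_gordan_all k : (0 < k)%N -> clebsch_gordan k.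
Proof.
elim/ltn_ind: k => k IHk k_gt0 Dh Dj Dm Dp.
apply: tens_equiv_dsum => // -[|[|d]] // _ dk.
  exact: tensor_rule_one.
by apply: tensor_rule_succ => //; apply: IHk.
Qed.

End UniqueIrreducibles.

Theorem mainTheorem2 (R : realType) (G : topologicalType)
  (mul : G -> G -> G) (inv : G -> G) (e : G) :
  is_compact_group mul inv e ->
  (forall n : nat, (0 < n)%N ->
     (exists rho : G -> 'M[R[i]]_n, irrep mul e rho) /\
     (forall rho sigma : G -> 'M[R[i]]_n,
        irrep mul e rho -> irrep mul e sigma -> rep_equiv rho sigma)) ->
  (forall (k : nat) (Dhalf : G -> 'M[R[i]]_2) (Dj : G -> 'M[R[i]]_k.+1)
          (Dm : G -> 'M[R[i]]_k) (Dp : G -> 'M[R[i]]_k.+2),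
     (0 < k)%N ->
     irrep mul e Dhalf -> irrep mul e Dj -> irrep mul e Dm -> irrep mul e Dp ->
     rep_equiv (tens_rep Dhalf Dj) (dsum_rep Dm Dp)) /\
  (forall (Dhalf : G -> 'M[R[i]]_2) (D0 : G -> 'M[R[i]]_1),
     irrep mul e Dhalf -> irrep mul e D0 ->
     rep_equiv (tens_rep Dhalf D0) Dhalf).
Proof.
move=> G_group unique_irreps; split.
  by move=> k Dh Dj Dm Dp k_gt0; exact: (clebsch_gordan_all G_group unique_irreps k_gt0).
exact: (clebsch_gordan_trivial unique_irreps).
Qed.
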